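(* Let $f=a_1+2a_2+4a_3+8a_4\in\mathcal{GB}_n^{16}$ with $a_1,a_2,a_3,a_4\in\mathcal{B}_n$. Then $f$ is gbent if and only if: (i) when $n$ is even: for all $c_1,c_2,c_3\in\mathbb{F}_2$ the Boolean function $c_1a_1\oplus c_2a_2\oplus c_3a_3\oplus a_4$ is bent, and for all $\mathbf{u}\in\mathbb{F}_2^n$ $$\mathcal{W}_{a_4}(\mathbf{u})\mathcal{W}_{a_2\oplus a_4}(\mathbf{u})=\mathcal{W}_{a_3\oplus a_4}(\mathbf{u})\mathcal{W}_{a_2\oplus a_3\oplus a_4}(\mathbf{u})=\mathcal{W}_{a_1\oplus a_4}(\mathbf{u})\mathcal{W}_{a_1\oplus a_2\oplus a_4}(\mathbf{u})=\mathcal{W}_{a_1\oplus a_3\oplus a_4}(\mathbf{u})\mathcal{W}_{a_1\oplus a_2\oplus a_3\oplus a_4}(\mathbf{u})$$ and $\mathcal{W}_{a_4}(\mathbf{u})\mathcal{W}_{a_3\oplus a_4}(\mathbf{u})=\mathcal{W}_{a_1\oplus a_4}(\mathbf{u})\mathcal{W}_{a_1\oplus a_3\oplus a_4}(\mathbf{u})$; (ii) when $n$ is odd: for all $c_1,c_2,c_3\in\mathbb{F}_2$ the Boolean function $c_1a_1\oplus c_2a_2\oplus c_3a_3\oplus a_4$ is semibent, and for every $\mathbf{u}\in\mathbb{F}_2^n$ one of the following holds: either $\mathcal{W}_{a_4}(\mathbf{u})\mathcal{W}_{a_2\oplus a_4}(\mathbf{u})=\mathcal{W}_{a_1\oplus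 a_4}(\mathbf{u})\mathcal{W}_{a_1\oplus a_2\oplus a_4}(\mathbf{u})=\pm2^{n+1}$ and $\mathcal{W}_{a_3\oplus a_4}(\mathbf{u})=\mathcal{W}_{a_2\oplus a_3\oplus a_4}(\mathbf{u})=\mathcal{W}_{a_1\oplus a_3\oplus a_4}(\mathbf{u})=\mathcal{W}_{a_1\oplus a_2\oplus a_3\oplus a_4}(\mathbf{u})=0$; or $\mathcal{W}_{a_4}(\mathbf{u})=\mathcal{W}_{a_2\oplus a_4}(\mathbf{u})=\mathcal{W}_{a_1\oplus a_4}(\mathbf{u})=\mathcal{W}_{a_1\oplus a_2\oplus a_4}(\mathbf{u})=0$ and $\mathcal{W}_{a_3\oplus a_4}(\mathbf{u})\mathcal{W}_{a_2\oplus a_3\oplus a_4}(\mathbf{u})=\mathcal{W}_{a_1\oplus a_3\oplus a_4}(\mathbf{u})\mathcal{W}_{a_1\oplus a_2\oplus a_3\oplus a_4}(\mathbf{u})=\pm2^{n+1}$.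
   Context: $\mathcal{B}_n$: Boolean functions $\mathbb{F}_2^n\to\mathbb{F}_2$; $\mathcal{GB}_n^q$: functions $\mathbb{F}_2^n\to\mathbb{Z}_q$; in $a_1+2a_2+4a_3+8a_4$ the values $0,1$ are viewed as integers and the sum is taken in $\mathbb{Z}_{16}$, while $\oplus$ is addition in $\mathbb{F}_2$. Walsh–Hadamard transform: $\mathcal{W}_g(\mathbf{u})=\sum_{\mathbf{x}\in\mathbb{F}_2^n}(-1)^{g(\mathbf{x})+\mathbf{u}\cdot\mathbf{x}}$. Generalized Walsh–Hadamard transform: $\mathcal{H}^{(q)}_f(\mathbf{u})=\sum_{\mathbf{x}}\zeta_q^{f(\mathbf{x})}(-1)^{\mathbf{u}\cdot\mathbf{x}}$, $\zeta_q=e^{2\pi i/q}$. $f\in\mathcal{GB}_n^q$ is gbent if $|\mathcal{H}^{(q)}_f(\mathbf{u})|=2^{n/2}$ for all $\mathbf{u}$. $g\in\mathcal{B}_n$ is bent if $|\mathcal{W}_g(\mathbf{u})|=2^{n/2}$ for all $\mathbf{u}$; $g$ is semibent if $|\mathcal{W}_g(\mathbf{u})|\in\{0,2^{(n+1)/2}\}$ for all $\mathbf{u}$ when $n$ is odd, resp. $\{0,2^{(n+2)/2}\}$ when $n$ is even. *)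

From HB Require Import structures.
From mathcomp Require Import all_boot all_order all_algebra all_field.
Set Implicit Arguments. Unset Strict Implicit. Unset Printing Implicit Defensive.
Import Order.TTheory GRing.Theory Num.Theory.
Local Open Scope ring_scope.

(* F_2^n, with F_2 = bool (xor = addb, product = andb). *)
Definition Vn (n : nat) := {ffun 'I_n -> bool}.

Definition dot (n : nat) (u x : Vn n) : bool := odd (\sum_(i < n) (u i && x i))%N.

Definition Bfun (n : nat) := Vn n -> bool.

Definition walsh (n : nat) (g : Bfun n) (u : Vn n) : int :=
  \sum_(x : Vn n) (-1) ^+ (g x (+) dot u x).

(* zeta_q = e^{2 pi i / q} for even q: (q/2).-root (-1) is the root with
   minimal non-negative argument, i.e. e^{i pi / (q/2)}. *)
Definition zeta (q : nat) : algC := (q./2).-root (-1).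

(* Generalized Walsh-Hadamard transform of f : F_2^n -> Z_q (values as nats < q). *)
Definition gwalsh (q n : nat) (f : Vn n -> nat) (u : Vn n) : algC :=
  \sum_(x : Vn n) zeta q ^+ (f x %% q)%N * (-1) ^+ dot u x.

Definition gbent (q n : nat) (f : Vn n -> nat) : Prop :=
  forall u : Vn n, `|gwalsh q f u| = sqrtC (2%:R ^+ n).

Definition bent (n : nat) (g : Bfun n) : Prop :=
  forall u : Vn n, `|(walsh g u)%:~R : algC| = sqrtC (2%:R ^+ n).

Definition semibent (n : nat) (g : Bfun n) : Prop :=
  forall u : Vn n,
    if odd n then (absz (walsh g u) == 0)%N || (absz (walsh g u) == 2 ^ (n.+1)./2)%N
    else (absz (walsh g u) == 0)%N || (absz (walsh g u) == 2 ^ (n.+2)./2)%N.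

Definition gb16 (n : nat) (a1 a2 a3 a4 : Bfun n) : Vn n -> nat :=
  fun x => (((a1 x : nat) + 2 * (a2 x : nat) + 4 * (a3 x : nat) + 8 * (a4 x : nat)) %% 16)%N.

Definition lincomb (n : nat) (a1 a2 a3 a4 : Bfun n) (c1 c2 c3 : bool) : Bfun n :=
  fun x => (c1 && a1 x) (+) (c2 && a2 x) (+) (c3 && a3 x) (+) a4 x.

Definition xorf (n : nat) (g h : Bfun n) : Bfun n := fun x => g x (+) h x.

From HB Require Import structures.
From mathcomp Require Import all_boot all_order all_algebra all_field.
From mathcomp Require Import ring zify.
Set Implicit Arguments. Unset Strict Implicit. Unset Printing Implicit Defensive.
Import Order.TTheory GRing.Theory Num.Theory.
Local Open Scope ring_scope.

(* Grouping the points x by k(x) = a1 x + 2 a2 x + 4 a3 x, the generalized Walsh value of f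
   at u is d(zeta) for the element d = d0 + d1 x + ... + d7 x^7 of Z[x]/(x^8 + 1) with
   d_k = sum_(k(x) = k) (-1)^(a4 x + u.x), where zeta is a primitive 16th root of unity.
   As 1, zeta, ..., zeta^7 are linearly independent over Q, f is gbent iff
   d(x) d(x^-1) = 2^n.  Such d are found by 2-adic descent: modulo 2 the ring is
   F_2[x]/(x + 1)^8, which forces 1 + x^4 to divide d, and (1 + x^4)^2 = 2 x^4; hence
   d = +-2^(n/2) x^k for n even and d = +-2^((n-1)/2) (1 + x^4) x^k for n odd.  The Walsh
   values at u of the eight functions c1 a1 + c2 a2 + c3 a3 + a4 form the Hadamard transform
   of (d_k), and the stated conditions single out exactly the Hadamard transforms of these
   d; for the converse, the Hadamard transform squares to 8. *)

(* [Oct d0 ... d7] stands for d0 + d1 x + ... + d7 x^7 in R[x]/(x^8 + 1): [fold d] is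
   (1 + x^4) d, [rot4 d] is x^4 d and [autocorr d] is d(x) d(x^-1). *)
Record oct (R : Type) := Oct { o0 : R; o1 : R; o2 : R; o3 : R; o4 : R; o5 : R; o6 : R; o7 : R }.

Section OctRing.
Variable R : comNzRingType.
Implicit Types (a : R) (d : oct R).

Definition oct_map S (g : R -> S) d : oct S :=
  Oct (g (o0 d)) (g (o1 d)) (g (o2 d)) (g (o3 d)) (g (o4 d)) (g (o5 d)) (g (o6 d)) (g (o7 d)).

Definition scale a d : oct R := oct_map (fun x => a * x) d.

Definition oct_const a : oct R := Oct a 0 0 0 0 0 0 0.

Definition octseq d : seq R := [:: o0 d; o1 d; o2 d; o3 d; o4 d; o5 d; o6 d; o7 d].

Definition seq_oct (s : seq R) : oct R := Oct s`_0 s`_1 s`_2 s`_3 s`_4 s`_5 s`_6 s`_7.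

Definition fold d : oct R :=
  Oct (o0 d - o4 d) (o1 d - o5 d) (o2 d - o6 d) (o3 d - o7 d)
      (o4 d + o0 d) (o5 d + o1 d) (o6 d + o2 d) (o7 d + o3 d).

Definition rot4 d : oct R :=
  Oct (- o4 d) (- o5 d) (- o6 d) (- o7 d) (o0 d) (o1 d) (o2 d) (o3 d).

Definition autocorr d : oct R :=
  let c1 := o0 d * o1 d - o0 d * o7 d + o1 d * o2 d + o2 d * o3 d + o3 d * o4 d
            + o4 d * o5 d + o5 d * o6 d + o6 d * o7 d in
  let c2 := o0 d * o2 d - o0 d * o6 d + o1 d * o3 d - o1 d * o7 d + o2 d * o4 d
            + o3 d * o5 d + o4 d * o6 d + o5 d * o7 d in
  let c3 := o0 d * o3 d - o0 d * o5 d + o1 d * o4 d - o1 d * o6 d + o2 d * o5 d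
            - o2 d * o7 d + o3 d * o6 d + o4 d * o7 d in
  Oct (o0 d ^+ 2 + o1 d ^+ 2 + o2 d ^+ 2 + o3 d ^+ 2 + o4 d ^+ 2 + o5 d ^+ 2
       + o6 d ^+ 2 + o7 d ^+ 2) c1 c2 c3 0 (- c3) (- c2) (- c1).

(* Coordinate 4 c1 + 2 c2 + c3 of [hadamard d] is sum_k (-1)^(c1 k0 + c2 k1 + c3 k2) d_k,
   where k = k0 + 2 k1 + 4 k2. *)
Definition hadamard d : oct R :=
  Oct (o0 d + o1 d + o2 d + o3 d + o4 d + o5 d + o6 d + o7 d)
      (o0 d + o1 d + o2 d + o3 d - o4 d - o5 d - o6 d - o7 d)
      (o0 d + o1 d - o2 d - o3 d + o4 d + o5 d - o6 d - o7 d)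
      (o0 d + o1 d - o2 d - o3 d - o4 d - o5 d + o6 d + o7 d)
      (o0 d - o1 d + o2 d - o3 d + o4 d - o5 d + o6 d - o7 d)
      (o0 d - o1 d + o2 d - o3 d - o4 d + o5 d - o6 d + o7 d)
      (o0 d - o1 d - o2 d + o3 d + o4 d - o5 d - o6 d + o7 d)
      (o0 d - o1 d - o2 d + o3 d - o4 d + o5 d + o6 d - o7 d).

Definition oct_at d (c1 c2 c3 : bool) : R :=
  match c1, c2, c3 with
  | false, false, false => o0 d | false, false, true => o1 d
  | false, true, false => o2 d | false, true, true => o3 d
  | true, false, false => o4 d | true, false, true => o5 d
  | true, true, false => o6 d | true, true, true => o7 d
  end.

Lemma octseqK : cancel octseq seq_oct.
Proof. by case. Qed.

Lemma scale_inj a : GRing.lreg a -> injective (scale a).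
Proof.
by move=> ra [? ? ? ? ? ? ? ?] [? ? ? ? ? ? ? ?] [] /ra-> /ra-> /ra-> /ra-> /ra-> /ra-> /ra-> /ra->.
Qed.

Lemma scale_oct_const a b : scale a (oct_const b) = oct_const (a * b).
Proof. by rewrite /scale /oct_map /oct_const /=; congr Oct; ring. Qed.

Lemma oct_at_scale a d c1 c2 c3 : oct_at (scale a d) c1 c2 c3 = a * oct_at d c1 c2 c3.
Proof. by case: c1 c2 c3 => [] [] []. Qed.

Lemma autocorr_scale a d : autocorr (scale a d) = scale (a ^+ 2) (autocorr d).
Proof. by rewrite /autocorr /scale /oct_map /=; congr Oct; ring. Qed.

Lemma autocorr_fold d : autocorr (fold d) = scale 2 (autocorr d).
Proof. by rewrite /autocorr /fold /scale /oct_map /=; congr Oct; ring. Qed.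

Lemma autocorr_rot4 d : autocorr (rot4 d) = autocorr d.
Proof. by rewrite /autocorr /rot4 /=; congr Oct; ring. Qed.

Lemma fold_fold d : fold (fold d) = scale 2 (rot4 d).
Proof. by rewrite /fold /rot4 /scale /oct_map /=; congr Oct; ring. Qed.

Lemma hadamard_scale a d : hadamard (scale a d) = scale a (hadamard d).
Proof. by rewrite /hadamard /scale /oct_map /=; congr Oct; ring. Qed.

Lemma hadamard_hadamard d : hadamard (hadamard d) = scale (2 ^+ 3) d.
Proof. by rewrite /hadamard /scale /oct_map /=; congr Oct; ring. Qed.

End OctRing.

Lemma autocorr_map (R S : comNzRingType) (g : {rmorphism R -> S}) (d : oct R) :
  autocorr (oct_map g d) = oct_map g (autocorr d).
Proof. by rewrite /autocorr /oct_map /=; congr Oct; ring. Qed.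

Lemma F2_cases (x : 'F_2) : x = 0 \/ x = 1.
Proof. by case: x => -[|[|//]] ?; [left|right]; apply: val_inj. Qed.

(* As x^8 + 1 = (x + 1)^8 over F_2, d(x) d(x^-1) = 0 forces (x + 1)^4 = x^4 + 1 to divide d. *)
Lemma autocorr_F2_eq0 (d : oct 'F_2) : autocorr d = oct_const 0 ->
  [/\ o0 d = o4 d, o1 d = o5 d, o2 d = o6 d & o3 d = o7 d].
Proof.
case: d => d0 d1 d2 d3 d4 d5 d6 d7 [] /eqP + /eqP + /eqP + /eqP + _ _ _ /=.
move: d0 d1 d2 d3 d4 d5 d6 d7.
by do 8 (move=> x; case: (F2_cases x) => ->; clear x).
Qed.

Definition perfect (n : nat) (d : oct int) : Prop := autocorr d = oct_const (2 ^+ n).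

Section Perfect.
Implicit Types (d : oct int).

Lemma perfect_scale k n d : perfect (k.*2 + n) (scale (2 ^+ k) d) <-> perfect n d.
Proof.
rewrite /perfect autocorr_scale exprD -muln2 exprM -scale_oct_const.
by split=> [/scale_inj|->] //; apply; apply/mulfI/expf_neq0/expf_neq0.
Qed.

Lemma perfect_scale2 n d : perfect n.+2 (scale 2 d) <-> perfect n d.
Proof. exact: (perfect_scale 1). Qed.

Lemma perfect_fold n d : perfect n.+1 (fold d) <-> perfect n d.
Proof.
rewrite /perfect autocorr_fold exprS -scale_oct_const.
by split=> [/scale_inj|->] //; apply; apply/mulfI.
Qed.

Lemma perfect_rot4 n d : perfect n (rot4 d) <-> perfect n d.
Proof. by rewrite /perfect autocorr_rot4. Qed.

Lemma perfect_dvd2 n d : perfect n.+1 d ->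
  [/\ (2 %| o0 d - o4 d)%Z, (2 %| o1 d - o5 d)%Z, (2 %| o2 d - o6 d)%Z & (2 %| o3 d - o7 d)%Z].
Proof.
move=> pd; have dvd2E x : (2 %| x)%Z = ((x%:~R : 'F_2) == 0).
  exact: dvdz_pcharf (pchar_Fp (isT : prime 2)) x.
have : autocorr (oct_map intr d) = oct_const (0 : 'F_2).
  have two0 : (2%:~R : 'F_2) = 0 by apply/eqP; rewrite -dvd2E.
  by rewrite autocorr_map pd /oct_map /= rmorphXn /= exprS two0 mul0r.
by case/autocorr_F2_eq0 => /= e0 e1 e2 e3; rewrite !dvd2E !intrB e0 e1 e2 e3 !subrr.
Qed.

Lemma perfect_unfold n d : perfect n.+1 d -> exists2 e, d = fold e & perfect n e.
Proof.
move=> pd; have [] := perfect_dvd2 pd.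
case: d pd => d0 d1 d2 d3 d4 d5 d6 d7 pd /= /dvdzP[t0 h0] /dvdzP[t1 h1] /dvdzP[t2 h2] /dvdzP[t3 h3].
pose e := Oct (d4 + t0) (d5 + t1) (d6 + t2) (d7 + t3) (- t0) (- t1) (- t2) (- t3).
have de : Oct d0 d1 d2 d3 d4 d5 d6 d7 = fold e by rewrite /fold /=; congr Oct; lia.
by exists e; rewrite // -perfect_fold -de.
Qed.

Lemma perfect_unscale2 n d : perfect n.+2 d -> exists2 e, d = scale 2 e & perfect n e.
Proof.
case/perfect_unfold=> e -> /perfect_unfold[f -> pf].
by exists (rot4 f); rewrite ?fold_fold ?perfect_rot4.
Qed.

Lemma sqr_eq1_sign (a : int) : a ^+ 2 = 1 -> exists b : bool, a = (-1) ^+ b.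
Proof.
move=> /eqP; rewrite sqrf_eq1 => /orP[]/eqP->; first by exists false.
by exists true.
Qed.

Lemma sqr_sum_eq1 (s : seq int) : \sum_(x <- s) x ^+ 2 = 1 ->
  exists i (b : bool), (i < size s)%N /\ s = set_nth 0 (nseq (size s) 0) i ((-1) ^+ b).
Proof.
elim: s => [|x s IHs]; first by rewrite big_nil.
rewrite big_cons /=; set S := \sum_(y <- s) _.
have S_ge0 : 0 <= S by apply: sumr_ge0 => y _; apply: sqr_ge0.
have [-> | nz_x] := eqVneq x 0.
  rewrite expr2 mul0r add0r => /IHs[i [b [lt_i s_eq]]].
  by exists i.+1, b; split=> //=; congr cons.
move=> sum1; have x2 : x ^+ 2 = 1 by move: nz_x; rewrite expr2; nia.
have [b ->] := sqr_eq1_sign x2.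
have /eqP : S = 0 by lia.
rewrite psumr_eq0 => [s0|y _]; last exact: sqr_ge0.
exists 0%N, b; split=> //=; congr cons.
by apply/all_pred1P; apply: sub_all s0 => y /=; rewrite sqrf_eq0.
Qed.

Definition unit_oct (i : nat) (b : bool) : oct int :=
  seq_oct (set_nth 0 (nseq 8 0) i ((-1) ^+ b)).

Lemma perfect0_unit d : perfect 0 d -> exists i b, (i < 8)%N /\ d = unit_oct i b.
Proof.
move=> /(congr1 (@o0 _)) /= sum1.
have [|i [b [lt_i8 dE]]] := @sqr_sum_eq1 (octseq d).
  by rewrite /= !big_cons big_nil addr0 !addrA; exact: sum1.
by exists i, b; split=> //; rewrite -[d]octseqK dE.
Qed.

End Perfect.

(* The conditions of the theorem on the eight Walsh values [oct_at w c1 c2 c3] of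
   c1 a1 + c2 a2 + c3 a3 + a4 at a fixed point. *)
Definition coord_cond (n : nat) (a : int) : Prop :=
  if odd n then ((absz a == 0) || (absz a == 2 ^ (n.+1)./2))%N : Prop else a ^+ 2 = 2 ^+ n.

Definition prod_cond (n : nat) (w : oct int) : Prop :=
  let P : int := 2 ^+ n.+1 in
  if ~~ odd n then
    [/\ o0 w * o2 w = o1 w * o3 w, o1 w * o3 w = o4 w * o6 w,
        o4 w * o6 w = o5 w * o7 w & o0 w * o1 w = o4 w * o5 w]
  else
    [/\ o0 w * o2 w = o4 w * o6 w, o4 w * o6 w = P \/ o4 w * o6 w = - P &
        [/\ o1 w = 0, o3 w = 0, o5 w = 0 & o7 w = 0]] \/
    [/\ [/\ o0 w = 0, o2 w = 0, o4 w = 0 & o6 w = 0],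
        o1 w * o3 w = o5 w * o7 w & o5 w * o7 w = P \/ o5 w * o7 w = - P].

Definition walsh_cond (n : nat) (w : oct int) : Prop :=
  (forall c1 c2 c3, coord_cond n (oct_at w c1 c2 c3)) /\ prod_cond n w.

Section WalshCond.
Implicit Types (d v w : oct int).

Lemma and3_iff (A B C : Prop) : [/\ A, B & C] <-> A /\ B /\ C.
Proof. by split=> [[]|[? []]]. Qed.

Lemma and4_iff (A B C D : Prop) : [/\ A, B, C & D] <-> A /\ B /\ C /\ D.
Proof. by split=> [[]|[? [? []]]]. Qed.

Lemma coord_cond_scale2 n a : coord_cond n.+2 (2 * a) <-> coord_cond n a.
Proof.
rewrite /coord_cond /= negbK; case: (odd n); last by rewrite exprMn !exprS !expr0 !mulr1; lia.
by rewrite abszM expnS muln_eq0 eqn_pmul2l.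
Qed.

Lemma coord_cond_dvd2 n a : coord_cond n.+2 a -> (2 %| a)%Z.
Proof.
rewrite /coord_cond /= negbK; case: (odd n) => [/orP[]/eqP a_eq|a2].
- by rewrite dvdzE a_eq.
- by rewrite dvdzE a_eq expnS; apply: dvdn_mulr.
- have : (2 %| a ^+ 2)%Z by rewrite a2 exprS dvdzE abszM; apply: dvdn_mulr.
  by rewrite !dvdzE abszX Euclid_dvdX // => /andP[].
Qed.

Lemma prod_cond_scale2 n v : prod_cond n.+2 (scale 2 v) <-> prod_cond n v.
Proof.
rewrite /prod_cond /scale /oct_map /= negbK !exprS.
by case: (odd n); rewrite /=; do 2 rewrite ?and3_iff ?and4_iff; lia.
Qed.

Lemma walsh_cond_scale2 n v : walsh_cond n.+2 (scale 2 v) <-> walsh_cond n v.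
Proof.
rewrite /walsh_cond prod_cond_scale2.
by split=> -[cv pv]; split=> // c1 c2 c3; move: (cv c1 c2 c3);
  rewrite oct_at_scale coord_cond_scale2.
Qed.

Lemma walsh_cond_halve n w : walsh_cond n.+2 w -> exists v, w = scale 2 v.
Proof.
case=> cw _; exists (oct_map (fun x => (x %/ 2)%Z) w).
have h c1 c2 c3 : oct_at w c1 c2 c3 = 2 * (oct_at w c1 c2 c3 %/ 2)%Z.
  by rewrite mulrC divzK //; apply: coord_cond_dvd2 (cw c1 c2 c3).
case: w h {cw} => w0 w1 w2 w3 w4 w5 w6 w7 h; rewrite /scale /oct_map /=.
by congr Oct; [exact: (h false false false) | exact: (h false false true)
  | exact: (h false true false) | exact: (h false true true) | exact: (h true false false)
  | exact: (h true false true) | exact: (h true true false) | exact: (h true true true)].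
Qed.

Lemma walsh_cond0_unit i b : (i < 8)%N -> walsh_cond 0 (hadamard (unit_oct i b)).
Proof.
move=> lt_i8; split=> [c1 c2 c3|]; case: b; case: i lt_i8 => [|[|[|[|[|[|[|[|//]]]]]]]] _;
  by [|case: c1 c2 c3 => [] [] []].
Qed.

Lemma walsh_cond1_unit i b : (i < 8)%N -> walsh_cond 1 (hadamard (fold (unit_oct i b))).
Proof.
move=> lt_i8; split=> [c1 c2 c3|]; case: b; case: i lt_i8 => [|[|[|[|[|[|[|[|//]]]]]]]] _;
  by [case: c1 c2 c3 => [] [] []
      | left; split=> //; first [by left | by right]
      | right; split=> //; first [by left | by right]].
Qed.

Lemma walsh_cond0_perfect w : walsh_cond 0 w -> perfect 6 (hadamard w).
Proof.
case: w => w0 w1 w2 w3 w4 w5 w6 w7 [sq].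
have sgn c1 c2 c3 := sqr_eq1_sign (sq c1 c2 c3).
have [b0 /= ->] := sgn false false false; have [b1 /= ->] := sgn false false true.
have [b2 /= ->] := sgn false true false; have [b3 /= ->] := sgn false true true.
have [b4 /= ->] := sgn true false false; have [b5 /= ->] := sgn true false true.
have [b6 /= ->] := sgn true true false; have [b7 /= ->] := sgn true true true.
rewrite /prod_cond /=.
by case: b0; case: b1; case: b2; case: b3; case: b4; case: b5; case: b6; case: b7
  => -[/eqP + /eqP + /eqP + /eqP +].
Qed.

Lemma coord_cond1_cases a : coord_cond 1 a -> [\/ a = 0, a = 2 | a = -2].
Proof.
move=> ca; have : a = 0 \/ a = 2 \/ a = -2.
  by move: ca; rewrite /coord_cond /= => /orP[]/eqP; lia.
by case=> [|[|]] ->; [apply: Or31 | apply: Or32 | apply: Or33].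
Qed.

Lemma walsh_cond1_perfect w : walsh_cond 1 w -> perfect 7 (hadamard w).
Proof.
case: w => w0 w1 w2 w3 w4 w5 w6 w7 [c]; have t c1 c2 c3 := coord_cond1_cases (c c1 c2 c3).
rewrite /prod_cond /= => -[[+ + [-> -> -> ->]] | [[-> -> -> ->] + +]].
- move: (t false false false) (t false true false) (t true false false) (t true true false) => /=.
  by do 4 (case=> ->); move=> /eqP + [/eqP + | /eqP +].
- move: (t false false true) (t false true true) (t true false true) (t true true true) => /=.
  by do 4 (case=> ->); move=> /eqP + [/eqP + | /eqP +].
Qed.

Lemma perfect_walsh_cond n d : perfect n d -> walsh_cond n (hadamard d).
Proof.
elim/ltn_ind: n d => -[|[|n]] IH d.
- by case/perfect0_unit=> i [b [lt_i8 ->]]; apply: walsh_cond0_unit.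
- by case/perfect_unfold=> e -> /perfect0_unit[i [b [lt_i8 ->]]]; apply: walsh_cond1_unit.
- case/perfect_unscale2=> e -> pe.
  by rewrite hadamard_scale walsh_cond_scale2; apply: IH pe.
Qed.

Lemma walsh_cond_perfect n w : walsh_cond n w -> perfect (6 + n) (hadamard w).
Proof.
elim/ltn_ind: n w => -[|[|n]] IH w; first exact: walsh_cond0_perfect.
  exact: walsh_cond1_perfect.
move=> ww; have [v ev] := walsh_cond_halve ww; move: ww; rewrite ev walsh_cond_scale2.
by move=> /IH pv; rewrite hadamard_scale; apply/perfect_scale2; apply: pv.
Qed.

Lemma perfect_iff_walsh_cond n d : perfect n d <-> walsh_cond n (hadamard d).
Proof.
split=> [|/walsh_cond_perfect]; first exact: perfect_walsh_cond.
by rewrite hadamard_hadamard => /(perfect_scale 3).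
Qed.

End WalshCond.

Local Notation z := (zeta 16).

Lemma zeta16_8 : z ^+ 8 = -1.
Proof. exact: rootCK. Qed.

Lemma zeta16S8 k : z ^+ k.+4.+4 = - z ^+ k.
Proof. by rewrite -[k.+4.+4]/(8 + k)%N exprD zeta16_8 mulN1r. Qed.

Lemma norm_zeta16 : `|z| = 1.
Proof.
apply: (pexpIrn (n := 8)) => //; rewrite ?qualifE /= ?normr_ge0 ?ler01 //.
by rewrite -normrX zeta16_8 normrN normr1 expr1n.
Qed.

Lemma conj_zeta16X k : (k <= 8)%N -> (z ^+ k)^* = - z ^+ (8 - k).
Proof.
move=> le_k8; have nz : z ^+ k != 0 by rewrite -normr_eq0 normrX norm_zeta16 expr1n oner_neq0.
apply: (mulfI nz); rewrite -normCK normrX norm_zeta16 !expr1n.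
by rewrite mulrN -exprD subnKC // zeta16_8 opprK.
Qed.

Lemma zeta16_primitive : 16.-primitive_root z.
Proof.
have z16 : z ^+ 16 = 1 by rewrite (exprM z 8 2) zeta16_8 sqrrN expr1n.
have [m pm dvd_m16] := prim_order_exists (isT : (0 < 16)%N) z16.
have ndvd_m8 : ~~ (m %| 8)%N.
  by rewrite (prim_order_dvd pm) zeta16_8 eq_sym -addr_eq0 -[1 + 1]/(2%:R : algC) pnatr_eq0.
suff m16 : m = 16%N by rewrite m16 in pm.
by move: dvd_m16 ndvd_m8 (dvdn_leq (isT : (0 < 16)%N) dvd_m16); move: m {pm}; do 17! case=> //.
Qed.

Definition oct_eval (R : comNzRingType) (y : R) (d : oct int) : R :=
  (o0 d)%:~R + (o1 d)%:~R * y + (o2 d)%:~R * y ^+ 2 + (o3 d)%:~R * y ^+ 3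
  + (o4 d)%:~R * y ^+ 4 + (o5 d)%:~R * y ^+ 5 + (o6 d)%:~R * y ^+ 6 + (o7 d)%:~R * y ^+ 7.

(* d(x^-1), since x^-1 = - x^7 modulo x^8 + 1. *)
Definition oct_conj (d : oct int) : oct int :=
  Oct (o0 d) (- o7 d) (- o6 d) (- o5 d) (- o4 d) (- o3 d) (- o2 d) (- o1 d).

Lemma oct_eval_conjM (R : comNzRingType) (y : R) (d : oct int) : y ^+ 8 = -1 ->
  oct_eval y d * oct_eval y (oct_conj d) = oct_eval y (autocorr d).
Proof.
case: d => d0 d1 d2 d3 d4 d5 d6 d7 y8.
(* the quotient of the product by y^8 + 1 *)
pose q := Oct (- (d1 ^+ 2 + d2 ^+ 2 + d3 ^+ 2 + d4 ^+ 2 + d5 ^+ 2 + d6 ^+ 2 + d7 ^+ 2))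
  (- (d2 * d1 + d3 * d2 + d4 * d3 + d5 * d4 + d6 * d5 + d7 * d6))
  (- (d3 * d1 + d4 * d2 + d5 * d3 + d6 * d4 + d7 * d5))
  (- (d4 * d1 + d5 * d2 + d6 * d3 + d7 * d4)) (- (d5 * d1 + d6 * d2 + d7 * d3))
  (- (d6 * d1 + d7 * d2)) (- (d7 * d1)) 0.
set d := Oct d0 d1 d2 d3 d4 d5 d6 d7.
have -> : oct_eval y d * oct_eval y (oct_conj d)
           = oct_eval y (autocorr d) + (y ^+ 8 + 1) * oct_eval y q.
  by rewrite /oct_eval /autocorr /oct_conj /d /=; ring.
by rewrite y8 addNr mul0r addr0.
Qed.

Lemma conj_oct_eval d : (oct_eval z d)^* = oct_eval z (oct_conj d).
Proof.
have c1 : z^* = - z ^+ 7 by rewrite -[z^*]/((z ^+ 1)^*) conj_zeta16X.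
rewrite /oct_eval /oct_conj /= !rmorphD !(rmorphM _ (_%:~R)) !rmorph_int /= c1 !conj_zeta16X //.
by rewrite !subSS !subn0; ring.
Qed.

Lemma sqr_norm_oct_eval d : `|oct_eval z d| ^+ 2 = oct_eval z (autocorr d).
Proof. by rewrite normCK conj_oct_eval oct_eval_conjM // zeta16_8. Qed.

Lemma oct_eval_inj : injective (oct_eval z).
Proof.
move=> a b eq_ab; rewrite -[a]octseqK -[b]octseqK.
pose q : {poly rat} := \poly_(i < 8) ((octseq a)`_i - (octseq b)`_i)%:~R.
have q_root : root (map_poly ratr q) z.
  rewrite /root (horner_coef_wide _ (n := 8)) ?size_map_poly ?size_poly //.
  rewrite !big_ord_recr big_ord0 /= !coef_map !coef_poly /= !rmorph_int !intrB.
  have diff0 : oct_eval z a - oct_eval z b = 0 by rewrite eq_ab subrr.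
  by apply/eqP; rewrite -[RHS]diff0 /oct_eval; ring.
have [p [Dp _] dvd_p] := minCpolyP z.
have size_p : size p = 9%N.
  have <- : size (map_poly (ratr : rat -> algC) p) = size p by rewrite size_map_poly.
  by rewrite -Dp (minCpoly_cyclotomic zeta16_primitive) size_cyclotomic.
have q0 : q = 0.
  apply/eqP; apply: contraT => nz_q; have := dvdp_leq nz_q (etrans (esym (dvd_p q)) q_root).
  by rewrite size_p ltnNge (leq_trans (size_poly _ _)).
have eq_i i : (i < 8)%N -> (octseq a)`_i = (octseq b)`_i.
  move=> lt_i8; have := coef_poly 8 (fun j => ((octseq a)`_j - (octseq b)`_j)%:~R : rat) i.
  by rewrite -/q q0 coef0 lt_i8 => /esym/eqP; rewrite intr_eq0 subr_eq0 => /eqP.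
by congr seq_oct; apply: (@eq_from_nth _ 0) => // i /eq_i.
Qed.

Lemma norm_oct_eval_perfect n d : `|oct_eval z d| = sqrtC (2%:R ^+ n) <-> perfect n d.
Proof.
have eval_const : oct_eval z (oct_const (2 ^+ n)) = 2%:R ^+ n.
  by rewrite /oct_eval /= rmorphXn /=; ring.
split=> [norm_d | pd].
  by apply: oct_eval_inj; rewrite -sqr_norm_oct_eval norm_d sqrtCK eval_const.
by rewrite -[LHS]sqrCK ?normr_ge0 // sqr_norm_oct_eval pd eval_const.
Qed.

Section BooleanFunctions.
Variables (n : nat) (a1 a2 a3 a4 : Bfun n).

Definition low3 (x : Vn n) : nat := (a1 x + 2 * a2 x + 4 * a3 x)%N.

Definition spectrum (u : Vn n) : oct int :=
  let s k := \sum_(x | low3 x == k) (-1) ^+ (a4 x (+) dot u x) in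
  Oct (s 0%N) (s 1%N) (s 2%N) (s 3%N) (s 4%N) (s 5%N) (s 6%N) (s 7%N).

Definition walsh_oct (u : Vn n) : oct int :=
  Oct (walsh a4 u) (walsh (xorf a3 a4) u) (walsh (xorf a2 a4) u)
      (walsh (xorf a2 (xorf a3 a4)) u) (walsh (xorf a1 a4) u) (walsh (xorf a1 (xorf a3 a4)) u)
      (walsh (xorf a1 (xorf a2 a4)) u) (walsh (xorf a1 (xorf a2 (xorf a3 a4))) u).

Lemma gwalsh_spectrum u : gwalsh 16 (gb16 a1 a2 a3 a4) u = oct_eval z (spectrum u).
Proof.
rewrite /gwalsh /oct_eval /spectrum /= !rmorph_sum !mulr_suml.
rewrite !(big_mkcond (fun x => low3 x == _)) -!big_split /=; apply: eq_bigr => x _.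
rewrite /gb16 /low3; case: (a1 x); case: (a2 x); case: (a3 x); case: (a4 x); case: (dot u x);
  by rewrite /= ?zeta16S8; ring.
Qed.

Lemma hadamard_spectrum u : hadamard (spectrum u) = walsh_oct u.
Proof.
rewrite /hadamard /spectrum /walsh_oct /walsh /= !(big_mkcond (fun x => low3 x == _)) /=.
congr Oct; rewrite -?sumrN -!big_split /=; apply: eq_bigr => x _; rewrite /low3 /xorf;
  by case: (a1 x); case: (a2 x); case: (a3 x); case: (a4 x); case: (dot u x).
Qed.

Lemma oct_at_walsh_oct u c1 c2 c3 :
  oct_at (walsh_oct u) c1 c2 c3 = walsh (lincomb a1 a2 a3 a4 c1 c2 c3) u.
Proof.
case: c1 c2 c3 => [] [] []; apply: eq_bigr => x _; rewrite /lincomb /xorf;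
  by case: (a1 x); case: (a2 x); case: (a3 x); case: (a4 x).
Qed.

Lemma gbent16_iff_walsh_cond :
  gbent 16 (gb16 a1 a2 a3 a4) <-> forall u, walsh_cond n (walsh_oct u).
Proof.
split=> h u; last first.
  by rewrite gwalsh_spectrum norm_oct_eval_perfect perfect_iff_walsh_cond hadamard_spectrum.
by rewrite -hadamard_spectrum -perfect_iff_walsh_cond -norm_oct_eval_perfect -gwalsh_spectrum.
Qed.

Lemma walsh_cond_components :
  (forall u, walsh_cond n (walsh_oct u)) <->
  (forall c1 c2 c3 u, coord_cond n (walsh (lincomb a1 a2 a3 a4 c1 c2 c3) u)) /\
  (forall u, prod_cond n (walsh_oct u)).
Proof.
split=> [wc | [cc pc] u]; last by split=> // c1 c2 c3; rewrite oct_at_walsh_oct.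
by split=> [c1 c2 c3 u | u]; have [cu pu] := wc u; rewrite // -oct_at_walsh_oct.
Qed.

End BooleanFunctions.

Lemma bent_coord_cond n (g : Bfun n) :
  ~~ odd n -> (forall u, coord_cond n (walsh g u)) <-> bent g.
Proof.
rewrite /coord_cond => /negbTE-> /=.
have norm_intr (a : int) : `|a%:~R : algC| ^+ 2 = (a ^+ 2)%:~R.
  by rewrite real_normK ?realz ?rmorphXn.
split=> bg u; last first.
  by apply: (intr_inj (R := algC)); rewrite -norm_intr bg sqrtCK rmorphXn.
by rewrite -[LHS]sqrCK ?normr_ge0 // norm_intr bg rmorphXn.
Qed.

Lemma semibent_coord_cond n (g : Bfun n) :
  odd n -> (forall u, coord_cond n (walsh g u)) <-> semibent g.
Proof. by rewrite /coord_cond /semibent => ->. Qed.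

Theorem mainTheorem7 (n : nat) (a1 a2 a3 a4 : Bfun n) :
  let W := @walsh n in
  let W4 := W a4 in
  let W24 := W (xorf a2 a4) in
  let W34 := W (xorf a3 a4) in
  let W234 := W (xorf a2 (xorf a3 a4)) in
  let W14 := W (xorf a1 a4) in
  let W124 := W (xorf a1 (xorf a2 a4)) in
  let W134 := W (xorf a1 (xorf a3 a4)) in
  let W1234 := W (xorf a1 (xorf a2 (xorf a3 a4))) in
  let P : int := 2 ^+ n.+1 in
  gbent 16 (gb16 a1 a2 a3 a4) <->
  (if ~~ odd n then
     (forall c1 c2 c3 : bool, bent (lincomb a1 a2 a3 a4 c1 c2 c3)) /\
     (forall u : Vn n,
        [/\ W4 u * W24 u = W34 u * W234 u,
            W34 u * W234 u = W14 u * W124 u,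
            W14 u * W124 u = W134 u * W1234 u &
            W4 u * W34 u = W14 u * W134 u])
   else
     (forall c1 c2 c3 : bool, semibent (lincomb a1 a2 a3 a4 c1 c2 c3)) /\
     (forall u : Vn n,
        ([/\ W4 u * W24 u = W14 u * W124 u,
             W14 u * W124 u = P \/ W14 u * W124 u = - P &
             [/\ W34 u = 0, W234 u = 0, W134 u = 0 & W1234 u = 0]])
        \/
        ([/\ [/\ W4 u = 0, W24 u = 0, W14 u = 0 & W124 u = 0],
             W34 u * W234 u = W134 u * W1234 u &
             W134 u * W1234 u = P \/ W134 u * W1234 u = - P]))).
Proof.
move=> W W4 W24 W34 W234 W14 W124 W134 W1234 P.
rewrite gbent16_iff_walsh_cond walsh_cond_components /prod_cond.
case par_n : (odd n) => /=.
  have comp c1 c2 c3 := semibent_coord_cond (lincomb a1 a2 a3 a4 c1 c2 c3) par_n.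
  by split=> -[cc pc]; split=> // c1 c2 c3; apply/comp; apply: cc.
have comp c1 c2 c3 := bent_coord_cond (lincomb a1 a2 a3 a4 c1 c2 c3) (negbT par_n).
by split=> -[cc pc]; split=> // c1 c2 c3; apply/comp; apply: cc.
Qed.
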